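(* Let $d$ be prime, $n\ge1$, and let $s,t\in\mathbb Z_d$ with $s,t\not\equiv0$ and $s^2+t^2\equiv1\pmod d$; let $\boxtimes=\boxtimes_{s,t}$ be the discrete beam splitter convolution, and define $\boxtimes^0\rho=\rho$, $\boxtimes^{N+1}\rho=(\boxtimes^N\rho)\boxtimes\rho$. If $\rho$ is a zero-mean $n$-qudit state, then for all $N\ge0$ $$\|\boxtimes^N\rho-\mathcal M(\rho)\|_2\le(1-MG(\rho))^N\|\rho-\mathcal M(\rho)\|_2 .$$ Moreover, if $\rho\neq\mathcal M(\rho)$ then $MG(\rho)>0$, so the convergence is exponentially fast.
   Context: Fix a prime $d$; $\chi(k)=e^{2\pi ik/d}$, $X|k\rangle=|k+1\rangle$, $Z|k\rangle=\chi(k)|k\rangle$ on $\mathbb C^d$; Weyl operators $w(p,q)=\chi(-2^{-1}pq)Z^pX^q$ (odd $d$), $w(p,q)=i^{-pq}Z^pX^q$ ($d=2$), $w(\vec p,\vec q)=\bigotimes_kw(p_k,q_k)$ for $(\vec p,\vec q)\in V^n=\mathbb Z_d^n\times\mathbb Z_d^n$; characteristic function $\Xi_\rho(\vec p,\vec q)=\mathrm{Tr}[\rho\,w(-\vec p,-\vec q)]$, support $\mathrm{Supp}(\Xi_\rho)=\{\vec x:\Xi_\rho(\vec x)\neq0\}$. The mean state $\mathcal M(\rho)$ has $\Xi_{\mathcal M(\rho)}(\vec x)=\Xi_\rho(\vec x)$ if $|\Xi_\rho(\vec x)|=1$ and $0$ otherwise; $\rho$ is zero-mean if $\Xi_{\mathcal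 M(\rho)}$ takes values only in $\{0,1\}$. Magic gap: $MG(\rho)=1-\max\{|\Xi_\rho(\vec x)|:\vec x\in\mathrm{Supp}(\Xi_\rho),|\Xi_\rho(\vec x)|\ne1\}$, with $MG(\rho)=0$ if the set is empty. Discrete beam splitter: the unitary $U_{s,t}|\vec i\rangle\otimes|\vec j\rangle=|s\vec i+t\vec j\rangle\otimes|t\vec i-s\vec j\rangle$ on $(\mathbb C^d)^{\otimes n}\otimes(\mathbb C^d)^{\otimes n}$, and $\rho\boxtimes_{s,t}\sigma=\mathrm{Tr}_B[U_{s,t}(\rho\otimes\sigma)U_{s,t}^\dagger]$; its characteristic function satisfies $\Xi_{\rho\boxtimes_{s,t}\sigma}(\vec x)=\Xi_\rho(s\vec x)\Xi_\sigma(t\vec x)$. $\|A\|_2=(\mathrm{Tr}A^\dagger A)^{1/2}$. *)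

(* operators on (C^d)^{\otimes n} are complex matrices over algC,
   indexed by the computational basis Z_d^n (functions 'I_n -> 'F_d). *)
From HB Require Import structures.
From mathcomp Require Import all_boot all_order all_algebra all_field.
Set Implicit Arguments. Unset Strict Implicit. Unset Printing Implicit Defensive.
Import Order.TTheory GRing.Theory Num.Theory.
Local Open Scope ring_scope.

Section Qudit.
Variables (d n : nat).

Definition Idx := {ffun 'I_n -> 'F_d}.
Definition PS := (Idx * Idx)%type.

Definition Op (T : finType) := T -> T -> algC.

Definition opmul (T : finType) (A B : Op T) : Op T :=
  fun x y => \sum_(z : T) A x z * B z y.
Definition opadj (T : finType) (A : Op T) : Op T := fun x y => (A y x)^*.
Definition optr (T : finType) (A : Op T) : algC := \sum_(x : T) A x x.
Definition opsub (T : finType) (A B : Op T) : Op T := fun x y => A x y - B x y.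
Definition kron (T1 T2 : finType) (A : Op T1) (B : Op T2) : Op (T1 * T2)%type :=
  fun x y => A x.1 y.1 * B x.2 y.2.
Definition ptrB (T1 T2 : finType) (A : Op (T1 * T2)%type) : Op T1 :=
  fun x y => \sum_(z : T2) A (x, z) (y, z).
Definition hsnorm (T : finType) (A : Op T) : algC := sqrtC (optr (opmul (opadj A) A)).

Definition is_state (T : finType) (rho : Op T) : Prop :=
  (forall v : T -> algC, 0 <= \sum_(x : T) \sum_(y : T) (v x)^* * rho x y * v y)
  /\ optr rho = 1.

(* chi(k) = e^{2 pi i k / d}; note d.-root (-1) = e^{i pi / d} *)
Definition omega : algC := (d.-root (-1)) ^+ 2.
Definition chi (k : 'F_d) : algC := omega ^+ (val k).

(* single-qudit Weyl operator w(p,q) as a matrix: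
   <x| Z^p X^q |y> = [x = y + q] chi(p x) *)
Definition wphase (p q : 'F_d) : algC :=
  if d == 2%N then 'i ^- (val p * val q)%N
  else chi (- ((2%:R)^-1 * p * q)).
Definition w1 (p q : 'F_d) : Op 'F_d :=
  fun x y => wphase p q * (x == y + q)%:R * chi (p * x).

Definition weyl (a : PS) : Op Idx :=
  fun x y => \prod_(k < n) w1 (a.1 k) (a.2 k) (x k) (y k).

Definition psopp (a : PS) : PS := ([ffun k => - a.1 k], [ffun k => - a.2 k]).

Definition charfn (rho : Op Idx) (a : PS) : algC := optr (opmul rho (weyl (psopp a))).

(* mean state: the operator whose characteristic function equals Xi_rho where
   |Xi_rho| = 1 and 0 elsewhere, written via the Weyl expansion
   sigma = d^{-n} sum_a Xi_sigma(a) w(a). *)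
Definition meanState (rho : Op Idx) : Op Idx :=
  fun x y => ((d ^ n)%:R)^-1 *
    \sum_(a : PS | `|charfn rho a| == 1) charfn rho a * weyl a x y.

Definition zero_mean (rho : Op Idx) : Prop :=
  forall a : PS, charfn (meanState rho) a = 0 \/ charfn (meanState rho) a = 1.

Definition magic_gap (rho : Op Idx) : algC :=
  if [exists a : PS, (charfn rho a != 0) && (`|charfn rho a| != 1)]
  then 1 - \big[Num.max/0]_(a : PS | (charfn rho a != 0) && (`|charfn rho a| != 1))
             `|charfn rho a|
  else 0.

Definition bsmap (s t : 'F_d) (ij : Idx * Idx) : Idx * Idx :=
  ([ffun k => s * ij.1 k + t * ij.2 k], [ffun k => t * ij.1 k - s * ij.2 k]).
Definition beamU (s t : 'F_d) : Op (Idx * Idx)%type :=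
  fun x y => (x == bsmap s t y)%:R.

Definition bconv (s t : 'F_d) (rho sigma : Op Idx) : Op Idx :=
  ptrB (opmul (opmul (beamU s t) (kron rho sigma)) (opadj (beamU s t))).

Fixpoint bconv_pow (s t : 'F_d) (N : nat) (rho : Op Idx) : Op Idx :=
  match N with
  | O => rho
  | S N' => bconv s t (bconv_pow s t N' rho) rho
  end.

End Qudit.

(* Every operator A on (C^d)^{(x)n} is controlled by its characteristic
   function Xi_A(a) = Tr[A w(-a)], and the proof works entirely on that side.
   - Weyl calculus (d an odd prime): w(p,q) has the entries
     phi(p,q) [x = y + q] chi(p.x), so w(a) w(c a) = w((1 + c) a), the Weyl
     operators are unitary, Xi_{w(a)}(b) = d^n [a = b], and Xi_A(p, .) is a
     twisted Fourier transform of a diagonal of A.  Consequently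
     sum_a |Xi_A(a)|^2 = d^n ||A||_2^2 (Parseval) and the mean state has
     characteristic function Xi_rho restricted to S = {a : |Xi_rho(a)| = 1}.
   - Positivity: for a state rho and a unitary U, |Tr[rho U]| <= 1, and
     Tr[rho U] = 1 forces rho U^dagger = rho.  Hence |Xi_rho| <= 1, and
     Xi_rho(a) = 1 implies Xi_rho(c a) = 1 for every scalar c.
   - Beam splitter: Xi_{A [x] B}(a) = Xi_A(s a) Xi_B(t a).
   For a zero-mean state, Xi_rho = 1 on S, S is stable under nonzero scalings
   and |Xi_rho| <= 1 - MG(rho) off S.  Induction on N bounds the characteristic
   function of conv^N rho - M(rho) at a by (1 - MG)^N times that of
   rho - M(rho) at s^N a, and Parseval together with the bijection a |-> s^N a
   turns this into the Hilbert-Schmidt estimate.  If MG(rho) = 0 only because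
   Xi_rho vanishes off S, then Xi_{rho - M(rho)} = 0 and Parseval gives
   rho = M(rho).  The case d = 2 cannot occur: s^2 + t^2 = 1 has no solution
   with s, t != 0 in Z_2. *)
From mathcomp Require Import all_boot all_order all_algebra all_field.
From mathcomp Require Import ring.
From Stdlib Require Import FunctionalExtensionality.
Import Order.TTheory GRing.Theory Num.Theory.
Local Open Scope ring_scope.
Set Implicit Arguments. Unset Strict Implicit. Unset Printing Implicit Defensive.

Lemma sum_delta (T : finType) (z0 : T) (G : T -> algC) :
  \sum_z (z == z0)%:R * G z = G z0.
Proof.
rewrite (bigD1 z0) //= eqxx mul1r big1 ?addr0 // => z /negbTE ->; by rewrite mul0r.
Qed.

Lemma sum_delta' (T : finType) (z0 : T) (G : T -> algC) :
  \sum_z G z * (z == z0)%:R = G z0.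
Proof. by rewrite -[RHS](sum_delta z0); apply: eq_bigr => z _; rewrite mulrC. Qed.

Section BigMax.
Variables (R : numDomainType) (I : eqType) (P : pred I) (G : I -> R).
Hypothesis G_ge0 : forall i, 0 <= G i.

Lemma bigmax_ge0 (r : seq I) : 0 <= \big[Num.max/0]_(i <- r | P i) G i.
Proof.
apply: (big_ind (fun z => 0 <= z)) => // x y x0 y0.
by rewrite /Num.max; case: ifP.
Qed.

Lemma bigmax_ub (r : seq I) b : b \in r -> P b -> G b <= \big[Num.max/0]_(i <- r | P i) G i.
Proof.
elim: r => // x r' IH; rewrite inE big_cons => /orP [/eqP <- | br] Pb.
  by rewrite Pb /Num.max; case: ifP => [/ltW|_] //.
have h := IH br Pb; case: ifP => _ //; rewrite /Num.max; case: ifP => // /negbT.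
rewrite real_ltNge ?negbK ?ger0_real ?G_ge0 ?bigmax_ge0 // => h'.
exact: le_trans h h'.
Qed.

Lemma bigmax_lt (r : seq I) c : 0 < c -> (forall i, P i -> G i < c) ->
  \big[Num.max/0]_(i <- r | P i) G i < c.
Proof.
move=> c0 h; apply: (big_ind (fun z => z < c)) => // x y xc yc.
by rewrite /Num.max; case: ifP.
Qed.
End BigMax.

(* A positive semidefinite operator rho defines the sesquilinear form
   <u|rho|v>; its Cauchy-Schwarz-type properties give the bounds on traces
   Tr[rho U] for unitaries U. *)
Section PositiveForm.
Variables (T : finType) (rho : Op T).

Definition sesq (u v : T -> algC) : algC :=
  \sum_x \sum_z (u x)^* * rho x z * v z.

Definition ket (x : T) : T -> algC := fun y => (y == x)%:R.

Lemma sesqDl u u' v : sesq (fun y => u y + u' y) v = sesq u v + sesq u' v.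
Proof.
rewrite /sesq -big_split; apply: eq_bigr => x _; rewrite -big_split.
by apply: eq_bigr => z _; rewrite rmorphD !mulrDl.
Qed.

Lemma sesqDr u v v' : sesq u (fun y => v y + v' y) = sesq u v + sesq u v'.
Proof.
rewrite /sesq -big_split; apply: eq_bigr => x _; rewrite -big_split.
by apply: eq_bigr => z _; rewrite !mulrDr.
Qed.

Lemma sesqZl c u v : sesq (fun y => c * u y) v = c^* * sesq u v.
Proof.
rewrite /sesq mulr_sumr; apply: eq_bigr => x _; rewrite mulr_sumr.
by apply: eq_bigr => z _; rewrite rmorphM !mulrA.
Qed.

Lemma sesqZr c u v : sesq u (fun y => c * v y) = c * sesq u v.
Proof.
rewrite /sesq mulr_sumr; apply: eq_bigr => x _; rewrite mulr_sumr.
by apply: eq_bigr => z _; rewrite mulrCA.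
Qed.

Lemma sesq_expand u v c :
  sesq (fun y => u y + c * v y) (fun y => u y + c * v y)
  = sesq u u + c * sesq u v + c^* * sesq v u + c^* * c * sesq v v.
Proof. by rewrite sesqDl !sesqDr !sesqZl !sesqZr; ring. Qed.

Lemma sesq_ketl x v : sesq (ket x) v = \sum_z rho x z * v z.
Proof.
rewrite /sesq /ket; under eq_bigr do rewrite rmorph_nat.
rewrite -(sum_delta x (fun x' => \sum_z rho x' z * v z)).
by apply: eq_bigr => x' _; rewrite mulr_sumr; apply: eq_bigr => z _; rewrite mulrA.
Qed.

Lemma sesq_ket x z : sesq (ket x) (ket z) = rho x z.
Proof. by rewrite sesq_ketl /ket sum_delta'. Qed.

Hypothesis rho_psd : forall v, 0 <= sesq v v.

(* c <u|v> + c^* <v|u> is real: it is the cross term of the (real) quadratic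
   form at u + c v *)
Lemma sesq_cross_real u v c : c * sesq u v + c^* * sesq v u \is Num.real.
Proof.
have Ruv := ger0_real (rho_psd (fun y => u y + c * v y)).
rewrite sesq_expand in Ruv.
have Ru := ger0_real (rho_psd u); have Rv := ger0_real (rho_psd v).
have -> : c * sesq u v + c^* * sesq v u =
    (sesq u u + c * sesq u v + c^* * sesq v u + c^* * c * sesq v v)
    - sesq u u - `|c| ^+ 2 * sesq v v by rewrite normCK; ring.
by rewrite !rpredB // rpredM // rpredX // normr_real.
Qed.

(* polarization: a positive semidefinite form is Hermitian *)
Lemma sesq_herm u v : sesq v u = (sesq u v)^*.
Proof.
have := sesq_cross_real u v 1; have := sesq_cross_real u v 'i.
rewrite !CrealE conjC1 !mul1r conjCi.
set a := sesq u v; set b := sesq v u.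
rewrite !rmorphD !rmorphM /= rmorphN /= !conjCi opprK => /eqP Ei /eqP E1.
have : 'i * (2%:R * (b - a^*)) =
    'i * ((a + b) - (a^* + b^*)) + ((- 'i * a^* + 'i * b^*) - ('i * a + - 'i * b)).
  by ring.
rewrite E1 Ei !subrr mulr0 addr0 => /eqP.
by rewrite !mulf_eq0 (negbTE (neq0Ci _)) pnatr_eq0 /= subr_eq0 => /eqP.
Qed.

Lemma psd_herm x z : rho x z = (rho z x)^*.
Proof. by rewrite -!sesq_ket sesq_herm. Qed.

Lemma sesq_null v : sesq v v = 0 -> forall u, sesq u v = 0.
Proof.
move=> v0 u; set b := sesq u v; set q := sesq u u; set r := (q + 1)^-1.
have q0 : 0 <= q := rho_psd u.
have r0 : 0 < r by rewrite invr_gt0 ltr_wpDl.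
have rR : r^* = r by apply/eqP; rewrite -CrealE ger0_real // ltW.
have H := rho_psd (fun y => v y + (- (b * r)) * u y).
rewrite sesq_expand v0 (sesq_herm u v) -/b -/q !rmorphN rmorphM /= rR in H.
have E : 0 + - (b * r) * b^* + - (b^* * r) * b + - (b^* * r) * - (b * r) * q
     = (`|b| ^+ 2 * r) * (r * q - 2%:R) by rewrite normCK; ring.
rewrite E in H.
have rq : r * q - 2%:R < 0.
  rewrite subr_lt0 (@le_lt_trans _ _ 1) ?ltr1n //.
  by rewrite mulrC ler_pdivrMr ?ltr_wpDl // mul1r lerDl.
move: H; rewrite nmulr_lge0 // pmulr_lle0 // => h.
have : `|b| ^+ 2 = 0 by apply/eqP; rewrite eq_le h exprn_ge0.
by move/eqP; rewrite expf_eq0 /= normr_eq0 => /eqP.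
Qed.

Hypothesis rho_tr1 : optr rho = 1.
Variable U : Op T.
Hypothesis U_isometry : forall z x, \sum_j (U j z)^* * U j x = (z == x)%:R.

Local Notation trU := (optr (opmul rho U)).

Definition rowc (j : T) : T -> algC := fun y => (U j y)^*.

Lemma trace_adj : \sum_j \sum_z rho j z * (U j z)^* = trU^*.
Proof.
rewrite /optr /opmul rmorph_sum exchange_big /=; apply: eq_bigr => j _.
rewrite rmorph_sum; apply: eq_bigr => z _; by rewrite rmorphM /= -psd_herm.
Qed.

Lemma sum_sesq_shift mu :
  \sum_j sesq (fun y => ket j y + mu * rowc j y) (fun y => ket j y + mu * rowc j y)
   = 1 + mu * trU^* + mu^* * trU + mu^* * mu.
Proof.
under eq_bigr do rewrite sesq_expand.
rewrite !big_split /= -!mulr_sumr -[mu^* * mu in RHS]mulr1.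
congr (_ + _ + _ + _ * _).
- by under eq_bigr do rewrite sesq_ket; exact: rho_tr1.
- by congr (_ * _); rewrite -trace_adj; apply: eq_bigr => j _; rewrite sesq_ketl.
- congr (_ * _); under eq_bigr do rewrite sesq_herm sesq_ketl.
  by rewrite -rmorph_sum /rowc trace_adj; exact: conjCK.
rewrite /sesq /rowc exchange_big /= -rho_tr1; apply: eq_bigr => x _.
rewrite exchange_big /= -(sum_delta' x (fun z => rho x z)); apply: eq_bigr => z _.
have -> : (z == x)%:R = ((x == z)%:R)^* :> algC by rewrite rmorph_nat eq_sym.
rewrite -U_isometry rmorph_sum mulr_sumr; apply: eq_bigr => j _.
by rewrite rmorphM /= conjCK; ring.
Qed.

Lemma trace_unitary_le1 : `|trU| <= 1.
Proof.
have [->|t0] := eqVneq trU 0; first by rewrite normr0 ler01.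
set nu := `|trU|.
have nu0 : nu != 0 by rewrite normr_eq0.
have nuR : nu^* = nu by apply/eqP; rewrite -CrealE normr_real.
have tc : trU^* = nu ^+ 2 / trU by rewrite normCK [trU * _]mulrC mulfK.
have H : 0 <= \sum_j sesq (fun y => ket j y + (- (trU / nu)) * rowc j y)
                         (fun y => ket j y + (- (trU / nu)) * rowc j y).
  by apply: sumr_ge0 => j _; exact: rho_psd.
rewrite sum_sesq_shift !rmorphN rmorphM /= fmorphV /= nuR tc in H.
have E : 1 + - (trU / nu) * (nu ^+ 2 / trU) + - (nu ^+ 2 / trU / nu) * trU +
      - (nu ^+ 2 / trU / nu) * - (trU / nu) = 2%:R * (1 - nu).
  by field; rewrite nu0 t0.
by rewrite E pmulr_rge0 ?ltr0n // subr_ge0 in H.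
Qed.

Lemma trace_unitary_eq1 :
  trU = 1 -> forall x j, rho x j = \sum_z rho x z * (U j z)^*.
Proof.
move=> t1 x j.
have : \sum_j sesq (fun y => ket j y + -1 * rowc j y)
                   (fun y => ket j y + -1 * rowc j y) = 0.
  by rewrite sum_sesq_shift t1 rmorphN1 rmorph1; ring.
move/psumr_eq0P => /(_ (fun j _ => rho_psd _) j isT) /sesq_null /(_ (ket x)).
rewrite sesqDr sesqZr sesq_ket sesq_ketl => /eqP.
by rewrite mulN1r subr_eq0 => /eqP.
Qed.
End PositiveForm.

Section Qudits.
Variables (d n : nat).
Hypothesis d_prime : prime d.
Hypothesis d_neq2 : d != 2%N.

Local Notation F := 'F_d.
Local Notation V := {ffun 'I_n -> 'F_d}.

Lemma d_gt0 : (0 < d)%N. Proof. exact: prime_gt0. Qed.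

Lemma d_gt2 : (2 < d)%N.
Proof. by have := prime_gt1 d_prime; rewrite leq_eqVlt eq_sym (negbTE d_neq2). Qed.

Lemma two_neq0 : (2%:R : F) != 0.
Proof.
apply/negP => /eqP h; have := val_Fp_nat d_prime 2.
by rewrite h /= modn_small ?d_gt2.
Qed.

Lemma omega_d : omega d ^+ d = 1.
Proof.
by rewrite /omega -exprM mulnC exprM rootCK ?d_gt0 // expr2 mulrNN mulr1.
Qed.

Lemma omega_neq1 : omega d != 1.
Proof.
rewrite /omega sqrf_eq1; apply/negP => /orP[] /eqP E.
- have := rootCK d_gt0 (-1 : algC); rewrite /= E expr1n => /eqP.
  by rewrite -subr_eq0 opprK -(natrD _ 1 1) pnatr_eq0.
- by have := @rootC_lt0 algC d (-1) (ltnW d_gt2); rewrite E ltrN10.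
Qed.

Lemma omega_prim : d.-primitive_root (omega d).
Proof.
have [m pm md] := prim_order_exists d_gt0 omega_d.
case/primeP: d_prime => _ /(_ m md) /orP[/eqP m1 | /eqP mE]; last by move: pm; rewrite mE.
have := omega_neq1; move: pm; rewrite m1 => /prim_expr_order.
by rewrite expr1 => ->; rewrite eqxx.
Qed.

Lemma norm_omega : `|omega d| = 1.
Proof. by apply/eqP; rewrite -(pexpr_eq1 d_gt0) // -normrX omega_d normr1. Qed.

Lemma chi_nat m : chi (m%:R : F) = omega d ^+ m.
Proof.
rewrite /chi; change (val (m%:R : F)) with (nat_of_ord (m%:R : F)).
by rewrite val_Fp_nat // prim_expr_mod // omega_prim.
Qed.

Lemma chiD (a b : F) : chi (a + b) = chi a * chi b.
Proof. by rewrite -[a]natr_Zp -[b]natr_Zp -natrD !chi_nat exprD. Qed.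

Lemma chi0 : chi (0 : F) = 1.
Proof. by rewrite -[0 : F]/(0%:R) chi_nat expr0. Qed.

Lemma chi_sum (I : Type) (r : seq I) (P : pred I) (G : I -> F) :
  chi (\sum_(i <- r | P i) G i) = \prod_(i <- r | P i) chi (G i).
Proof. exact: (big_morph _ chiD chi0). Qed.

Lemma norm_chi (a : F) : `|chi a| = 1.
Proof. by rewrite /chi normrX norm_omega expr1n. Qed.

Lemma chi_conj (a : F) : (chi a)^* = chi (- a).
Proof.
have chi_neq0 : chi a != 0 by rewrite -normr_eq0 norm_chi oner_eq0.
apply: (mulIf chi_neq0); rewrite -chiD addNr chi0 mulrC -normCK.
by rewrite norm_chi expr1n.
Qed.

Lemma chi_eq1 (c : F) : (chi c == 1) = (c == 0).
Proof.
rewrite /chi -(prim_order_dvd omega_prim).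
have [->|cn0] := eqVneq c 0; first by rewrite dvdn0.
apply: gtnNdvd; first by rewrite lt0n; apply: contraNneq cn0 => h; apply/eqP; exact: val_inj.
by have := ltn_ord c; rewrite [X in (_ < X)%N -> _]Fp_cast.
Qed.

Lemma sum_chi (c : F) :
  \sum_(k : F) chi (c * k) = if c == 0 then (d%:R : algC) else 0.
Proof.
have [->|cn0] := eqVneq c 0.
  by under eq_bigr do rewrite mul0r chi0; rewrite sumr_const card_Fp.
set S := \sum_(k : F) _.
have shift : chi c * S = S.
  rewrite /S mulr_sumr [RHS](reindex_inj (addIr (1 : F))) /=.
  by apply: eq_bigr => k _; rewrite -chiD mulrDr mulr1 addrC.
have : (chi c - 1) * S = 0 by rewrite mulrBl shift mul1r subrr.
by move/eqP; rewrite mulf_eq0 subr_eq0 chi_eq1 (negbTE cn0) => /eqP.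
Qed.

Definition dot (u v : V) : F := \sum_k u k * v k.
Definition vsc (c : F) (u : V) : V := [ffun k => c * u k].

Lemma dotC (u v : V) : dot u v = dot v u.
Proof. by apply: eq_bigr => k _; rewrite mulrC. Qed.
Lemma dotDl (u v w : V) : dot (u + v) w = dot u w + dot v w.
Proof. by rewrite /dot -big_split; apply: eq_bigr => k _; rewrite ffunE mulrDl. Qed.
Lemma dotDr (u v w : V) : dot u (v + w) = dot u v + dot u w.
Proof. by rewrite dotC dotDl !(dotC _ u). Qed.
Lemma dotZl (c : F) (u v : V) : dot (vsc c u) v = c * dot u v.
Proof. by rewrite /dot mulr_sumr; apply: eq_bigr => k _; rewrite ffunE mulrA. Qed.
Lemma dotZr (c : F) (u v : V) : dot u (vsc c v) = c * dot u v.
Proof. by rewrite dotC dotZl dotC. Qed.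
Lemma dotNl (u v : V) : dot (- u) v = - dot u v.
Proof. by rewrite /dot -sumrN; apply: eq_bigr => k _; rewrite ffunE mulNr. Qed.
Lemma dotNr (u v : V) : dot u (- v) = - dot u v.
Proof. by rewrite dotC dotNl dotC. Qed.
Lemma dotBl (u v w : V) : dot (u - v) w = dot u w - dot v w.
Proof. by rewrite dotDl dotNl. Qed.
Lemma dotBr (u v w : V) : dot u (v - w) = dot u v - dot u w.
Proof. by rewrite dotDr dotNr. Qed.
Lemma dot0l (v : V) : dot 0 v = 0.
Proof. by rewrite /dot big1 // => k _; rewrite ffunE mul0r. Qed.

Lemma sum_chi_dot (v : V) :
  \sum_(x : V) chi (dot v x) = if v == 0 then ((d ^ n)%N%:R : algC) else 0.
Proof.
under eq_bigr do rewrite chi_sum.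
rewrite -(bigA_distr_bigA (fun k z => chi (v k * z))) /=.
under eq_bigr do rewrite sum_chi.
have [->|vn0] := eqVneq v 0.
  rewrite (eq_bigr (fun _ => d%:R)) => [|k _]; last by rewrite ffunE eqxx.
  by rewrite prodr_const card_ord natrX.
have [k vk] : exists k, v k != 0.
  apply/existsP; apply: contraNT vn0; rewrite negb_exists => /forallP v0.
  by apply/eqP/ffunP => k; rewrite ffunE; apply/eqP; rewrite -[_ == _]negbK v0.
by rewrite (bigD1 k) //= (negbTE vk) mul0r.
Qed.

Lemma prod_eq_ind (x z : V) : \prod_k ((x k == z k)%:R : algC) = (x == z)%:R.
Proof.
have [->|xz] := eqVneq x z; first by rewrite big1 // => k _; rewrite eqxx.
have [k xk] : exists k, x k != z k.
  apply/existsP; apply: contraNT xz; rewrite negb_exists => /forallP xz.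
  by apply/eqP/ffunP => k; apply/eqP; rewrite -[_ == _]negbK xz.
by rewrite (bigD1 k) //= (negbTE xk) mul0r.
Qed.

Definition phase (p q : V) : algC := chi (- (2%:R^-1 * dot p q)).

Lemma phaseN (p q : V) : phase (- p) (- q) = phase p q.
Proof. by rewrite /phase dotNl dotNr opprK. Qed.

Lemma weylE (a : V * V) x y :
  weyl a x y = phase a.1 a.2 * (x == y + a.2)%:R * chi (dot a.1 x).
Proof.
have shift : \prod_k ((x k == y k + a.2 k)%:R : algC) = (x == y + a.2)%:R.
  by rewrite -prod_eq_ind; apply: eq_bigr => k _; rewrite ffunE.
rewrite /weyl /w1 /wphase (negbTE d_neq2) !big_split /= shift.
congr (_ * _ * _); last by rewrite /dot chi_sum.
rewrite /phase /dot mulr_sumr -sumrN chi_sum.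
by apply: eq_bigr => k _; rewrite mulrA.
Qed.

Definition psc (c : F) (a : V * V) : V * V := (vsc c a.1, vsc c a.2).

Lemma psoppE (a : V * V) : psopp a = (- a.1, - a.2).
Proof. by []. Qed.

Lemma psoppK (a : V * V) : psopp (psopp a) = a.
Proof. by case: a => p q; rewrite !psoppE /= !opprK. Qed.

Lemma psc0 (a : V * V) : psc 0 a = (0, 0).
Proof. by rewrite /psc; congr (_, _); apply/ffunP => k; rewrite !ffunE mul0r. Qed.

Lemma psc1 (a : V * V) : psc 1 a = a.
Proof. by case: a => p q; rewrite /psc; congr (_, _); apply/ffunP => k; rewrite !ffunE mul1r. Qed.

Lemma pscM (c c' : F) (a : V * V) : psc c (psc c' a) = psc (c * c') a.
Proof. by rewrite /psc; congr (_, _); apply/ffunP => k; rewrite !ffunE mulrA. Qed.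

Lemma psc_opp (a : V * V) : psc (-1) (psopp a) = a.
Proof.
by case: a => p q; rewrite /psc; congr (_, _); apply/ffunP => k; rewrite !ffunE mulN1r opprK.
Qed.

Lemma psopp_psc (c : F) (a : V * V) : psopp (psc c a) = psc (- c) a.
Proof. by rewrite /psopp /psc; congr (_, _); apply/ffunP => k; rewrite !ffunE mulNr. Qed.

Lemma psc_inj (c : F) : c != 0 -> injective (psc c).
Proof. by move=> c0; apply: (can_inj (g := psc c^-1)) => a; rewrite pscM mulVf // psc1. Qed.

Lemma weyl0 x y : weyl ((0 : V), (0 : V)) x y = (x == y)%:R.
Proof. by rewrite weylE /phase /= !dot0l mulr0 oppr0 chi0 mul1r mulr1 addr0. Qed.

Lemma weyl_mul (a : V * V) (c : F) x y :
  opmul (weyl a) (weyl (psc c a)) x y = weyl (psc (1 + c) a) x y.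
Proof.
rewrite /opmul.
transitivity (\sum_(z : V) (z == x - a.2)%:R *
   (phase a.1 a.2 * chi (dot a.1 x) * weyl (psc c a) z y)).
  apply: eq_bigr => z _; rewrite weylE.
  have -> : (x == z + a.2) = (z == x - a.2) by rewrite [RHS]eq_sym subr_eq.
  by rewrite -!mulrA mulrCA.
rewrite sum_delta !weylE /=.
have -> : (x - a.2 == y + vsc c a.2) = (x == y + vsc (1 + c) a.2).
  rewrite subr_eq; congr (_ == _); apply/ffunP => k; rewrite !ffunE; ring.
set I := (_ == _)%:R.
have regroup : forall A B C D : algC, A * B * (C * I * D) = (A * B * C * D) * I.
  by move=> *; ring.
rewrite /phase regroup -!chiD [RHS]mulrAC -chiD !dotZl !dotZr dotBr.
by congr (chi _ * _); field; exact: two_neq0.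
Qed.

Lemma conj_weyl (a : V * V) x y : (weyl a x y)^* = weyl (psopp a) y x.
Proof.
rewrite !weylE /= !rmorphM /= rmorph_nat !chi_conj phaseN.
have -> : (y == x + - a.2) = (x == y + a.2) by rewrite eq_sym subr_eq.
case: eqP => [->|_] /=; last by rewrite !mulr0 !mul0r.
rewrite !mulr1 /phase -!chiD dotNl dotDr; congr chi.
by field; exact: two_neq0.
Qed.

Lemma weyl_unitary (b : V * V) z x :
  \sum_j (weyl b j z)^* * weyl b j x = (z == x)%:R.
Proof.
under eq_bigr do rewrite conj_weyl.
by have := weyl_mul (psopp b) (-1) z x; rewrite psc_opp addrN psc0 weyl0.
Qed.

Lemma charfnE (A : Op (Idx d n)) (a : V * V) :
  charfn A a = phase a.1 a.2 * \sum_(y : V) A (y + a.2) y * chi (- dot a.1 y).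
Proof.
rewrite /charfn /optr /opmul psoppE.
transitivity (\sum_(x : V) A x (x - a.2) * (phase a.1 a.2 * chi (- dot a.1 (x - a.2)))).
  apply: eq_bigr => x _; rewrite (bigD1 (x - a.2)) //= big1 ?addr0 => [|z zne].
    by rewrite weylE /= eqxx mulr1 phaseN dotNl.
  by rewrite weylE /= (negbTE zne) mulr0 mul0r mulr0.
rewrite (reindex_inj (addIr a.2)) mulr_sumr; apply: eq_bigr => y _ /=.
by rewrite addrK mulrCA.
Qed.

Lemma charfnZ (c : algC) (A : Op (Idx d n)) a :
  charfn (fun x y => c * A x y) a = c * charfn A a.
Proof.
rewrite /charfn /optr /opmul mulr_sumr; apply: eq_bigr => x _.
by rewrite mulr_sumr; apply: eq_bigr => z _; rewrite mulrA.
Qed.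

Lemma charfn_sum (I : finType) (P : pred I) (A : I -> Op (Idx d n)) a :
  charfn (fun x y => \sum_(i | P i) A i x y) a = \sum_(i | P i) charfn (A i) a.
Proof.
rewrite /charfn /optr /opmul.
under eq_bigr do under eq_bigr do rewrite mulr_suml.
under eq_bigr do rewrite exchange_big /=.
exact: exchange_big.
Qed.

Lemma charfn_sub (A B : Op (Idx d n)) a : charfn (opsub A B) a = charfn A a - charfn B a.
Proof.
rewrite /charfn /optr /opmul /opsub -sumrB; apply: eq_bigr => x _.
by rewrite -sumrB; apply: eq_bigr => z _; rewrite mulrBl.
Qed.

Lemma charfn_weyl (a b : V * V) :
  charfn (weyl a) b = if a == b then ((d ^ n)%N%:R : algC) else 0.
Proof.
rewrite charfnE; under eq_bigr do rewrite weylE.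
case: a => p q; case: b => p' q' /=.
have -> : ((p, q) == (p', q')) = (q' == q) && (p == p').
  by rewrite xpair_eqE andbC eq_sym.
have shift_eq : forall y : V, (y + q' == y + q) = (q' == q).
  by move=> y; apply/eqP/eqP => [/addrI|->].
under eq_bigr do rewrite shift_eq.
have [->|] /= := eqVneq q' q; last first.
  by rewrite big1 ?mulr0 // => y _; rewrite !(mulr0, mul0r).
transitivity (phase p' q * phase p q * chi (dot p q) * \sum_(y : V) chi (dot (p - p') y)).
  rewrite -!mulrA; congr (_ * _); rewrite !mulr_sumr; apply: eq_bigr => y _.
  by rewrite dotDr chiD dotBl chiD; ring.
rewrite sum_chi_dot subr_eq0; case: eqP => [->|_]; last by rewrite mulr0.
suff -> : phase p' q * phase p' q * chi (dot p' q) = 1 by rewrite mul1r.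
rewrite /phase -!chiD -[RHS]chi0; congr chi.
by field; exact: two_neq0.
Qed.

Lemma charfn_mean (rho : Op (Idx d n)) b :
  charfn (meanState rho) b = if `|charfn rho b| == 1 then charfn rho b else 0.
Proof.
rewrite /meanState charfnZ charfn_sum.
under eq_bigr do rewrite charfnZ charfn_weyl.
rewrite big_mkcond (bigD1 b) //= eqxx big1 ?addr0 => [|a ab]; last first.
  by rewrite eq_sym (negbTE ab) mulr0 if_same.
case: ifP => _; last by rewrite mulr0.
by rewrite mulrCA mulVf ?mulr1 // pnatr_eq0 expn_eq0 negb_and -lt0n d_gt0.
Qed.

Lemma plancherel (f : V -> algC) :
  \sum_(p : V) `|\sum_(y : V) f y * chi (- dot p y)| ^+ 2
   = ((d ^ n)%N%:R) * \sum_(y : V) `|f y| ^+ 2.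
Proof.
transitivity (\sum_(p : V) \sum_(y : V) \sum_(y' : V) f y * (f y')^* * chi (dot (y' - y) p)).
  apply: eq_bigr => p _; rewrite normCK rmorph_sum mulr_suml; apply: eq_bigr => y _.
  rewrite mulr_sumr; apply: eq_bigr => y' _; rewrite rmorphM /= chi_conj opprK.
  by rewrite dotBl !(dotC _ p) chiD; ring.
rewrite exchange_big /=; under eq_bigr do rewrite exchange_big /=.
under eq_bigr do under eq_bigr do rewrite -mulr_sumr sum_chi_dot subr_eq0.
rewrite mulr_sumr; apply: eq_bigr => y _.
rewrite (bigD1 y) //= eqxx big1 ?addr0 => [|y' /negbTE ->]; last by rewrite mulr0.
by rewrite normCK; ring.
Qed.

Definition hs2 (A : Op (Idx d n)) : algC := \sum_(x : V) \sum_(y : V) `|A x y| ^+ 2.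

Lemma hs2_ge0 (A : Op (Idx d n)) : 0 <= hs2 A.
Proof. by apply: sumr_ge0 => x _; apply: sumr_ge0 => y _; exact: exprn_ge0. Qed.

Lemma hsnormE (A : Op (Idx d n)) : hsnorm A = sqrtC (hs2 A).
Proof.
rewrite /hsnorm /optr /opmul /opadj /hs2 exchange_big /=; congr sqrtC.
by apply: eq_bigr => x _; apply: eq_bigr => y _; rewrite normCK mulrC.
Qed.

Lemma parseval (A : Op (Idx d n)) :
  \sum_(a : V * V) `|charfn A a| ^+ 2 = ((d ^ n)%N%:R) * hs2 A.
Proof.
under eq_bigr do rewrite charfnE normrM exprMn /phase norm_chi expr1n mul1r.
transitivity (\sum_(p : V) \sum_(q : V) `|\sum_(y : V) A (y + q) y * chi (- dot p y)| ^+ 2).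
  by rewrite pair_bigA.
rewrite exchange_big /=; under eq_bigr do rewrite (plancherel (fun y => A (y + _) y)).
rewrite -mulr_sumr; congr (_ * _); rewrite exchange_big /= /hs2 [RHS]exchange_big /=.
by apply: eq_bigr => y _; rewrite [RHS](reindex_inj (addrI y)).
Qed.

Lemma charfn_inj (A B : Op (Idx d n)) : (forall a, charfn A a = charfn B a) -> A = B.
Proof.
move=> AB; have hs0 : hs2 (opsub A B) = 0.
  have := parseval (opsub A B).
  rewrite big1 => [|a _]; last by rewrite charfn_sub AB subrr normr0 expr2 mulr0.
  move/esym/eqP; rewrite mulf_eq0 pnatr_eq0 expn_eq0 => /orP [/andP [/eqP d0 _]|/eqP //].
  by move: d_gt0; rewrite [X in (0 < X)%N]d0.
apply: functional_extensionality => x; apply: functional_extensionality => y.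
have row0 := psumr_eq0P (fun x _ => sumr_ge0 _ (fun y _ => exprn_ge0 2 (normr_ge0 _))) hs0 (i := x) isT.
have := psumr_eq0P (fun y _ => exprn_ge0 2 (normr_ge0 _)) row0 (i := y) isT.
by move/eqP; rewrite expf_eq0 /= normr_eq0 /opsub subr_eq0 => /eqP.
Qed.

Section StateCharfn.
Variable rho : Op (Idx d n).
Hypothesis rho_state : is_state rho.

Lemma charfn_le1 a : `|charfn rho a| <= 1.
Proof. exact: (trace_unitary_le1 rho_state.1 rho_state.2 (weyl_unitary _)). Qed.

Lemma charfn1_invariant a :
  charfn rho a = 1 -> forall x y, opmul rho (weyl a) x y = rho x y.
Proof.
move=> Xa1 x y.
rewrite (trace_unitary_eq1 rho_state.1 rho_state.2 (weyl_unitary _) Xa1 x y).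
by apply: eq_bigr => z _; rewrite conj_weyl psoppK.
Qed.

Lemma weyl_power_invariant a :
  (forall x y, opmul rho (weyl a) x y = rho x y) ->
  forall (k : nat) x y, opmul rho (weyl (psc k%:R a)) x y = rho x y.
Proof.
move=> inv; elim=> [|k IH] x y.
  by rewrite psc0 /opmul; under eq_bigr do rewrite weyl0; rewrite sum_delta'.
transitivity (opmul (opmul rho (weyl a)) (weyl (psc k%:R a)) x y).
  rewrite mulrS /opmul; under eq_bigr do rewrite -(weyl_mul a k%:R) /opmul mulr_sumr.
  rewrite exchange_big /=; apply: eq_bigr => z _; rewrite mulr_suml.
  by apply: eq_bigr => w _; rewrite mulrA.
by rewrite -IH; apply: eq_bigr => z _; rewrite inv.
Qed.

Lemma charfn1_scale a : charfn rho a = 1 -> forall c, charfn rho (psc c a) = 1.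
Proof.
move=> Xa1 c; have inv := weyl_power_invariant (charfn1_invariant Xa1) (val (- c)).
rewrite natr_Zp in inv.
by rewrite /charfn psopp_psc /optr -rho_state.2; apply: eq_bigr => x _; exact: inv.
Qed.
End StateCharfn.

Section BeamSplitter.
Variables (s t : F).
Hypothesis st_unit : s ^+ 2 + t ^+ 2 = 1.

Local Notation bs := (@bsmap d n s t).

Lemma bsK (w : V * V) : bs (bs w) = w.
Proof.
case: w => i j; rewrite /bsmap /=; congr (_, _); apply/ffunP => k; rewrite !ffunE.
  by transitivity ((s ^+ 2 + t ^+ 2) * i k); [ring | rewrite st_unit mul1r].
by transitivity ((s ^+ 2 + t ^+ 2) * j k); [ring | rewrite st_unit mul1r].
Qed.

Lemma bs_inj : injective bs.
Proof. exact: (can_inj bsK). Qed.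

Lemma bconvE (A B : Op (Idx d n)) x y :
  bconv s t A B x y =
  \sum_(z : V) A (bs (x, z)).1 (bs (y, z)).1 * B (bs (x, z)).2 (bs (y, z)).2.
Proof.
rewrite /bconv /ptrB /opmul /beamU /opadj /kron; apply: eq_bigr => z _.
have bs_eq : forall X u : V * V, (X == bs u) = (u == bs X).
  by move=> X u; apply/eqP/eqP => ->; rewrite bsK.
under eq_bigr do rewrite rmorph_nat mulr_suml.
rewrite -(sum_delta' (bs (y, z)) (fun w => A (bs (x, z)).1 w.1 * B (bs (x, z)).2 w.2)).
apply: eq_bigr => w _; rewrite bs_eq -mulr_suml; congr (_ * _).
under eq_bigr do rewrite bs_eq.
exact: (sum_delta (bs (x, z)) (fun u => A u.1 w.1 * B u.2 w.2)).
Qed.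

Lemma phase_split (p q : V) :
  phase (vsc s p) (vsc s q) * phase (vsc t p) (vsc t q) = phase p q.
Proof.
rewrite /phase -chiD !dotZl !dotZr; congr chi.
transitivity (- (2%:R^-1 * ((s ^+ 2 + t ^+ 2) * dot p q))); first ring.
by rewrite st_unit mul1r.
Qed.

Lemma charfn_bconv (A B : Op (Idx d n)) a :
  charfn (bconv s t A B) a = charfn A (psc s a) * charfn B (psc t a).
Proof.
rewrite !charfnE /psc /= -phase_split.
rewrite -!mulrA; congr (_ * _); rewrite [RHS]mulrCA; congr (_ * _).
under eq_bigr do rewrite bconvE mulr_suml.
rewrite pair_bigA (reindex_inj bs_inj).
rewrite mulr_suml; under [RHS]eq_bigr do rewrite mulr_sumr.
rewrite [RHS]pair_bigA /=; apply: eq_bigr => -[u v] _.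
have e1 : forall x : F, x = (s ^+ 2 + t ^+ 2) * x by move=> x; rewrite st_unit mul1r.
rewrite [RHS]mulrACA -chiD.
congr (_ * _ * _); [congr (A _ _) | congr (B _ _) | congr chi];
  try (apply/ffunP => k; rewrite !ffunE /=;
       first [rewrite [u k in RHS]e1 | rewrite [v k in RHS]e1]; ring).
rewrite -opprD; congr (- _); rewrite !dotZl /dot !mulr_sumr -big_split.
by apply: eq_bigr => k _ /=; rewrite ffunE; ring.
Qed.
End BeamSplitter.

Section Convergence.
Variables (s t : F) (rho : Op (Idx d n)).
Hypotheses (s_neq0 : s != 0) (t_neq0 : t != 0) (st_unit : s ^+ 2 + t ^+ 2 = 1).
Hypotheses (rho_state : is_state rho) (rho_zero_mean : zero_mean rho).

Local Notation unimod a := (`|charfn rho a| == 1).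
Local Notation gapset a := ((charfn rho a != 0) && (`|charfn rho a| != 1)).
Local Notation maxgap := (\big[Num.max/0]_(a | gapset a) `|charfn rho a|).
Local Notation rate := (1 - magic_gap rho).

Lemma unimod_charfn1 a : unimod a -> charfn rho a = 1.
Proof.
move=> Sa; case: (rho_zero_mean a); rewrite charfn_mean Sa // => X0.
by move: Sa; rewrite X0 normr0 eq_sym oner_eq0.
Qed.

Lemma unimod_scale a : unimod a -> forall c, charfn rho (psc c a) = 1.
Proof. by move=> Sa; apply: charfn1_scale => //; exact: unimod_charfn1. Qed.

Lemma not_unimod_scale a c : ~~ unimod a -> c != 0 -> ~~ unimod (psc c a).
Proof.
move=> nSa c0; apply: contra nSa => Sca.
by have := unimod_scale Sca c^-1; rewrite pscM mulVf // psc1 => ->; rewrite normr1.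
Qed.

Lemma rateE : rate = if [exists a, gapset a] then maxgap else 1.
Proof. by rewrite /magic_gap; case: ifP => _; rewrite ?subr0 // opprB addrC subrK. Qed.

Lemma rate_ge0 : 0 <= rate.
Proof. rewrite rateE; case: ifP => _; last exact: ler01.
by apply: bigmax_ge0 => a; exact: normr_ge0. Qed.

Lemma charfn_le_rate b : ~~ unimod b -> `|charfn rho b| <= rate.
Proof.
move=> nSb; rewrite rateE; case: ifP => [_|/negbT /existsPn gap0].
  have [->|nz] := eqVneq (charfn rho b) 0; first by rewrite normr0; apply: bigmax_ge0 => a; exact: normr_ge0.
  apply: (@bigmax_ub _ _ (fun a => gapset a) (fun a => `|charfn rho a|)).
  - by move=> a; exact: normr_ge0.
  - exact: mem_index_enum.
  - by rewrite nz.
by have := gap0 b; rewrite nSb andbT negbK => /eqP ->; rewrite normr0 ler01.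
Qed.

Lemma conv_pow_unimod N a : unimod a -> charfn (bconv_pow s t N rho) a = 1.
Proof.
elim: N a => [|N IH] a Sa /=; first exact: unimod_charfn1.
by rewrite charfn_bconv // IH ?unimod_scale ?mul1r // normr1.
Qed.

Lemma conv_pow_decay N a : ~~ unimod a ->
  `|charfn (bconv_pow s t N rho) a| <= rate ^+ N * `|charfn rho (psc (s ^+ N) a)|.
Proof.
elim: N a => [|N IH] a nSa /=; first by rewrite expr0 mul1r psc1.
rewrite charfn_bconv // normrM exprSr mulrAC.
apply: ler_pM; rewrite ?normr_ge0 //.
  by have := IH (psc s a) (not_unimod_scale nSa s_neq0); rewrite pscM -exprSr.
exact: charfn_le_rate (not_unimod_scale nSa t_neq0).
Qed.

Lemma charfn_deviation_le N a :
  `|charfn (opsub (bconv_pow s t N rho) (meanState rho)) a|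
    <= rate ^+ N * `|charfn (opsub rho (meanState rho)) (psc (s ^+ N) a)|.
Proof.
rewrite !charfn_sub !charfn_mean.
have [Sa|nSa] := boolP (unimod a).
  by rewrite conv_pow_unimod // unimod_charfn1 // subrr normr0 mulr_ge0 ?exprn_ge0 ?rate_ge0.
have nS := not_unimod_scale nSa (expf_neq0 N s_neq0).
by rewrite (negbTE nS) !subr0; exact: conv_pow_decay.
Qed.

(* summed over phase space via Parseval and the bijection a |-> s^N a *)
Lemma hs2_deviation_le N :
  hs2 (opsub (bconv_pow s t N rho) (meanState rho))
   <= (rate ^+ N) ^+ 2 * hs2 (opsub rho (meanState rho)).
Proof.
have dn : 0 < ((d ^ n)%N%:R : algC) by rewrite ltr0n expn_gt0 d_gt0.
rewrite -(ler_pM2l dn) mulrCA -!parseval mulr_sumr.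
rewrite [X in _ <= X](reindex_inj (psc_inj (expf_neq0 N s_neq0))) /=.
apply: ler_sum => a _; rewrite -exprMn.
apply: lerXn2r; rewrite ?nnegrE ?normr_ge0 ?mulr_ge0 ?exprn_ge0 ?rate_ge0 //.
exact: charfn_deviation_le.
Qed.

Lemma hsnorm_deviation_le N :
  hsnorm (opsub (bconv_pow s t N rho) (meanState rho))
      <= rate ^+ N * hsnorm (opsub rho (meanState rho)).
Proof.
have r0 : 0 <= rate ^+ N by rewrite exprn_ge0 // rate_ge0.
rewrite !hsnormE -[rate ^+ N in X in _ <= X](sqrCK r0).
rewrite -sqrtCM ?nnegrE ?exprn_ge0 ?hs2_ge0 ?rate_ge0 //.
rewrite ler_sqrtC ?nnegrE ?mulr_ge0 ?exprn_ge0 ?hs2_ge0 ?rate_ge0 //.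
exact: hs2_deviation_le.
Qed.

(* either some |Xi_rho(a)| lies strictly between 0 and 1, and then MG > 0, or
   Xi_rho vanishes off its unimodular points, and then rho = M(rho) *)
Lemma magic_gap_pos : rho <> meanState rho -> 0 < magic_gap rho.
Proof.
move=> rho_neq; rewrite /magic_gap; case: ifP => [_|/negbT /existsPn gap0].
  rewrite subr_gt0; apply: bigmax_lt => [|a /andP [_ n1]]; first exact: ltr01.
  by rewrite lt_neqAle n1 charfn_le1.
exfalso; apply/rho_neq/charfn_inj => a; rewrite charfn_mean.
case: ifP => [//|/negbT nSa].
by have := gap0 a; rewrite nSa andbT negbK => /eqP.
Qed.
End Convergence.
End Qudits.

(* In Z_2 the only nonzero element is 1 and 1 + 1 = 0, so a beam splitter
   with s, t != 0 forces d != 2. *)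
Lemma beam_splitter_char_neq2 (d : nat) (s t : 'F_d) :
  s != 0 -> t != 0 -> s ^+ 2 + t ^+ 2 = 1 -> d != 2%N.
Proof.
move=> s0 t0 st1; apply/eqP => d2; subst d.
by move: s t s0 t0 st1 => [[|[|//]] ps] [[|[|//]] pt].
Qed.

Theorem mainTheorem17 (d n : nat) (s t : 'F_d) (rho : Op (Idx d n)) :
  prime d -> (1 <= n)%N ->
  s != 0 -> t != 0 -> s ^+ 2 + t ^+ 2 = 1 ->
  is_state rho -> zero_mean rho ->
  (forall N : nat,
      hsnorm (opsub (bconv_pow s t N rho) (meanState rho))
      <= (1 - magic_gap rho) ^+ N * hsnorm (opsub rho (meanState rho)))
  /\ (rho <> meanState rho -> 0 < magic_gap rho).
Proof.
move=> d_prime _ s_neq0 t_neq0 st_unit rho_state rho_zero_mean.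
have d_neq2 := beam_splitter_char_neq2 s_neq0 t_neq0 st_unit.
split; first by move=> N; exact: hsnorm_deviation_le.
exact: magic_gap_pos.
Qed.
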